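(* Let $\mathbb{F}$ be a field, $\Gamma$ a finite abelian group written multiplicatively with unit $e$, and $M_1,M_2$ $\mathbb{F}$-representable matroids on a common ground set $E$ of the same rank $r$, with $A_k$ an $r\times E$ matrix over $\mathbb{F}$ representing $M_k$ ($k=1,2$). Let $\psi\colon E\to\Gamma$ be a labeling, let $D_\psi$ be the $E\times E$ diagonal matrix whose $(j,j)$ entry is $x_j\psi(j)$, where $\{x_j\}_{j\in E}$ are indeterminates, viewed as a matrix over the group ring $\mathbb{F}(\{x_j\}_{j\in E})[\Gamma]$, and let $\Xi:=A_1D_\psi A_2^\top$. Then for each $g\in\Gamma$, the coefficient of $g$ in $\det(\Xi)$ is a non-zero polynomial in $\{x_j\}_{j\in E}$ if and only if $M_1$ and $M_2$ have a common basis $B$ with $\prod_{j\in B}\psi(j)=g$.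
   Context: $A_k$ represents $M_k$ means the bases of $M_k$ are exactly the sets of columns forming a basis of the column space. The group ring $R[\Gamma]$ over a commutative ring $R$ is the set of formal sums $\sum_{g\in\Gamma}a_g g$ with $a_g\in R$, with the natural addition and multiplication $(\sum a_g g)(\sum b_h h)=\sum a_g b_h\,gh$; the coefficient of $g$ in $\det(\Xi)$ lies in $\mathbb{F}[\{x_j\}]$. *)

From HB Require Import structures.
From mathcomp Require Import all_boot all_order all_algebra all_fingroup.
From mathcomp Require Import mpoly.
Set Implicit Arguments. Unset Strict Implicit. Unset Printing Implicit Defensive.
Import GRing.Theory.

(* The group ring R[G] of a finite group G over a ring R:             *)
(* formal sums \sum_g a_g g, represented by the coefficient function  *)
(* g |-> a_g, with pointwise addition and convolution product         *)
Section GroupRing.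
Variables (R : pzRingType) (G : finGroupType).

Definition grpring := {ffun G -> R}.
HB.instance Definition _ := GRing.Zmodule.on grpring.

Local Open Scope ring_scope.

Definition gr_one : grpring := [ffun x => ((x == 1%g)%:R : R)].
Definition gr_mul (f h : grpring) : grpring :=
  [ffun x => \sum_(y : G) f y * h ((y^-1) * x)%g].

Lemma gr_mulA : associative gr_mul.
Proof.
move=> f h k; apply/ffunP=> x; rewrite /gr_mul !ffunE.
under [RHS]eq_bigr do rewrite ffunE big_distrl /=.
rewrite exchange_big /=.
apply: eq_bigr => y _; rewrite ffunE big_distrr /=.
rewrite [RHS](reindex (fun w => (y * w)%g)) /=; last first.
  by exists (fun z => (y^-1 * z)%g) => z _; rewrite ?mulKg ?mulKVg.
apply: eq_bigr => w _; rewrite mulKg mulrA invMg -mulgA.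
by [].
Qed.

Lemma gr_mul1 : left_id gr_one gr_mul.
Proof.
move=> f; apply/ffunP=> x; rewrite /gr_mul ffunE (bigD1 1%g) //= big1 ?addr0.
  by rewrite ffunE eqxx mul1r invg1 mul1g.
by move=> y /negbTE ny1; rewrite ffunE ny1 mul0r.
Qed.

Lemma gr_mulr1 : right_id gr_one gr_mul.
Proof.
move=> f; apply/ffunP=> x; rewrite /gr_mul ffunE (bigD1 x) //= big1 ?addr0.
  by rewrite ffunE mulVg eqxx mulr1.
move=> y nyx; rewrite ffunE.
have -> : ((y^-1 * x)%g == 1%g) = false.
  by apply/negbTE; rewrite -eq_mulVg1.
by rewrite mulr0.
Qed.

Lemma gr_mulDl : left_distributive gr_mul +%R.
Proof.
move=> f h k; apply/ffunP=> x; rewrite /gr_mul !ffunE -big_split /=.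
by apply: eq_bigr => y _; rewrite ffunE mulrDl.
Qed.

Lemma gr_mulDr : right_distributive gr_mul +%R.
Proof.
move=> f h k; apply/ffunP=> x; rewrite /gr_mul !ffunE -big_split /=.
by apply: eq_bigr => y _; rewrite ffunE mulrDr.
Qed.

HB.instance Definition _ :=
  GRing.Zmodule_isPzRing.Build grpring gr_mulA gr_mul1 gr_mulr1 gr_mulDl gr_mulDr.

Definition gr_elem (c : R) (g : G) : grpring := [ffun x => if x == g then c else 0].

Definition gr_coef (f : grpring) (g : G) : R := f g.

End GroupRing.

(* Matroid represented by an r x m matrix A over a field F, with       *)
(* ground set E = 'I_m: B is a basis iff the columns of A indexed by B *)
(* form a basis of the column space of A (linearly independent and     *)
(* spanning the column space).                                         *)
Section Matroid.
Local Open Scope ring_scope.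
Variables (F : fieldType) (r m : nat).

Definition cols_of (A : 'M[F]_(r, m)) (B : {set 'I_m}) : 'M[F]_(r, #|B|) :=
  colsub (fun i : 'I_#|B| => enum_val i) A.

Definition is_rep_basis (A : 'M[F]_(r, m)) (B : {set 'I_m}) : bool :=
  row_free (cols_of A B)^T && (A^T <= (cols_of A B)^T)%MS.

End Matroid.

Section Xi.
Local Open Scope ring_scope.
Variables (F : fieldType) (G : finGroupType) (r m : nat).

Definition lift_mx (A : 'M[F]_(r, m)) : 'M[grpring {mpoly F[m]} G]_(r, m) :=
  map_mx (fun c => gr_elem (c%:MP) 1%g) A.

Definition D_psi (psi : 'I_m -> G) : 'M[grpring {mpoly F[m]} G]_m :=
  diag_mx (\row_j gr_elem 'X_j (psi j)).

Definition Xi (A1 A2 : 'M[F]_(r, m)) (psi : 'I_m -> G) :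
    'M[grpring {mpoly F[m]} G]_r :=
  lift_mx A1 *m D_psi psi *m (lift_mx A2)^T.

End Xi.

(* Expanding det Xi multilinearly, the coefficient of g is the polynomial
   sum over f : 'I_r -> E with psi(f 0) ... psi(f (r-1)) = g of
   (prod_i A1 i (f i)) * det (columns f of A2) * x^f.  Terms with a
   non-injective f vanish, and two injective f with the same monomial x^f
   differ by a permutation of 'I_r; as Gamma is abelian they have the same
   psi-product, and summing over the permutations is one factor of the
   Cauchy-Binet formula.  So the coefficient of x^B, for B the image of an
   injective f with psi-product g, is det A1[B] * det A2[B], which is
   non-zero iff B is a common basis; all other coefficients vanish. *)
From HB Require Import structures.
From mathcomp Require Import all_boot all_order all_algebra all_fingroup.
From mathcomp Require Import mpoly.
Import GRing.Theory.
Local Open Scope ring_scope.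
Set Implicit Arguments. Unset Strict Implicit. Unset Printing Implicit Defensive.

Section GroupRingElements.
Variables (R : pzRingType) (G : finGroupType).
Local Notation RG := (grpring R G).

Lemma gr_elemM (a b : R) (x y : G) :
  gr_elem a x * gr_elem b y = gr_elem (a * b) (x * y)%g :> RG.
Proof.
apply/ffunP=> z; rewrite /GRing.mul /= /gr_mul !ffunE.
rewrite (bigD1 x) //= big1 ?addr0 => [|w /negbTE nwx]; last by rewrite ffunE nwx mul0r.
rewrite !ffunE eqxx -(can_eq (mulKg x)) mulKVg.
by case: eqP; rewrite ?mulr0.
Qed.

Lemma gr_one_elem : (1 : RG) = gr_elem 1 1%g.
Proof. by apply/ffunP=> z; rewrite !ffunE; case: eqP. Qed.

Lemma gr_elem_prod (I : Type) (s : seq I) (a : I -> R) (h : I -> G) :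
  \prod_(i <- s) gr_elem (a i) (h i)
    = gr_elem (\prod_(i <- s) a i) (\prod_(i <- s) h i)%g :> RG.
Proof.
elim: s => [|i s IHs]; first by rewrite !big_nil gr_one_elem.
by rewrite !big_cons IHs gr_elemM.
Qed.

Lemma gr_coef_sum (I : Type) (s : seq I) (P : pred I) (f : I -> RG) (g : G) :
  gr_coef (\sum_(i <- s | P i) f i) g = \sum_(i <- s | P i) gr_coef (f i) g.
Proof. exact: sum_ffunE. Qed.

Lemma gr_coef_elem (a : R) (x g : G) :
  gr_coef (gr_elem a x : RG) g = if x == g then a else 0.
Proof. by rewrite /gr_coef ffunE eq_sym. Qed.

Lemma gr_coef_signM (b : bool) (f : RG) (g : G) :
  gr_coef ((-1) ^+ b * f) g = (-1) ^+ b * gr_coef f g.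
Proof. by rewrite !mulr_sign; case: b; rewrite // /gr_coef ffunE. Qed.

End GroupRingElements.

Section ColumnBases.
Variables (F : fieldType) (r m : nat).

Lemma trmx_colsub k (f : 'I_k -> 'I_m) (A : 'M[F]_(r, m)) :
  (colsub f A)^T = rowsub f A^T.
Proof. by apply/matrixP => i j; rewrite !mxE. Qed.

Lemma submx_rowsub_im k k' (f : 'I_k -> 'I_m) (f' : 'I_k' -> 'I_m)
    (X : 'M[F]_(m, r)) :
  (forall i, exists j, f i = f' j) -> (rowsub f X <= rowsub f' X)%MS.
Proof.
move=> im_f; apply/row_subP => i; rewrite row_rowsub.
by have [j ->] := im_f i; rewrite -(row_rowsub f') row_sub.
Qed.

Lemma is_rep_basisE (A : 'M[F]_(r, m)) (B : {set 'I_m}) : \rank A = r ->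
  is_rep_basis A B = (\rank (cols_of A B) == #|B|) && (\rank (cols_of A B) == r).
Proof.
move=> rkA; have subA : ((cols_of A B)^T <= A^T)%MS.
  by rewrite trmx_colsub rowsub_sub.
by rewrite /is_rep_basis /row_free -(mxrank_leqif_sup subA).2 !mxrank_tr rkA.
Qed.

Lemma card_rep_basis (A : 'M[F]_(r, m)) (B : {set 'I_m}) :
  \rank A = r -> is_rep_basis A B -> #|B| = r.
Proof. by move=> rkA; rewrite is_rep_basisE // => /andP[/eqP -> /eqP]. Qed.

Lemma det_colsub_neq0_inj (A : 'M[F]_(r, m)) (f : 'I_r -> 'I_m) :
  \det (colsub f A) != 0 -> injective f.
Proof.
move=> detA; apply/injectiveP; apply: contraR detA => /injectivePn[i1 [i2 ne12 f12]].
by rewrite -det_tr (determinant_alternate ne12) // => k; rewrite !mxE f12.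
Qed.

Lemma is_rep_basis_imset (A : 'M[F]_(r, m)) (f : 'I_r -> 'I_m) :
  \rank A = r -> injective f ->
  is_rep_basis A (f @: [set: 'I_r]) = (\det (colsub f A) != 0).
Proof.
move=> rkA f_inj; set B := f @: _.
have cardB : #|B| = r by rewrite card_imset // cardsT card_ord.
have eq_cols : ((cols_of A B)^T == (colsub f A)^T)%MS.
  rewrite /cols_of !trmx_colsub; apply/andP; split; apply: submx_rowsub_im => i.
    by have /imsetP[j _ ->] := enum_valP i; exists j.
  have Bfi : f i \in B by apply: imset_f.
  by exists (enum_rank_in Bfi (f i)); rewrite enum_rankK_in.
rewrite is_rep_basisE // -mxrank_tr (eqmx_rank eq_cols) mxrank_tr cardB andbb.
by rewrite -unitfE -unitmxE -row_free_unit.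
Qed.

End ColumnBases.

Lemma enum_set_ord (T : finType) (B : {set T}) (r : nat) : #|B| = r ->
  exists2 f : 'I_r -> T, injective f & f @: [set: 'I_r] = B.
Proof.
move=> cardB; exists (fun i => enum_val (cast_ord (esym cardB) i)).
  by move=> i j /enum_val_inj /cast_ord_inj.
apply/setP => j; apply/imsetP/idP => [[i _ ->] | Bj]; first exact: enum_valP.
by exists (cast_ord cardB (enum_rank_in Bj j)); rewrite // cast_ordK enum_rankK_in.
Qed.

Section Monomials.
Variables (r m : nat).

Definition mnm_of (f : 'I_r -> 'I_m) : 'X_{1..m} := (\sum_i U_(f i))%MM.

Lemma mnm_ofE (f : 'I_r -> 'I_m) j : mnm_of f j = (\sum_i (f i == j))%N.
Proof. by rewrite /mnm_of mnm_sumE; apply: eq_bigr => i _; rewrite mnm1E. Qed.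

Lemma prod_mpolyX (R : nzRingType) (f : 'I_r -> 'I_m) :
  \prod_i ('X_(f i) : {mpoly R[m]}) = 'X_[mnm_of f].
Proof.
rewrite /mnm_of; elim: (index_enum _) => [|i s IHs].
  by rewrite !big_nil mpolyX0.
by rewrite !big_cons IHs mpolyXD.
Qed.

Lemma mnm_of_perm (f : 'I_r -> 'I_m) (s : 'S_r) : mnm_of (f \o s) = mnm_of f.
Proof. by rewrite /mnm_of [RHS](reindex_perm s). Qed.

Lemma mnm_of_inj_perm (f0 f : 'I_r -> 'I_m) :
  injective f0 -> injective f -> mnm_of f = mnm_of f0 ->
  exists s : 'S_r, f =1 f0 \o s.
Proof.
move=> f0_inj f_inj mnm_f.
have im_f i : exists k, f0 k = f i.
  have : (0 < mnm_of f (f i))%N by rewrite mnm_ofE (bigD1 i) //= eqxx.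
  rewrite mnm_f mnm_ofE; have [k /eqP f0k _ | f0N] := pickP (fun k => f0 k == f i).
    by exists k.
  by rewrite big1 // => k _; rewrite f0N.
have [s' s'E] := fin_all_exists im_f.
have s'_inj : injective s' by move=> i j eq_ij; apply: f_inj; rewrite -!s'E eq_ij.
by exists (perm s'_inj) => i; rewrite /= permE s'E.
Qed.

End Monomials.

Section ExpansionOfXi.
Variables (F : fieldType) (G : finGroupType) (r m : nat).
Variables (A1 A2 : 'M[F]_(r, m)) (psi : 'I_m -> G).

Definition expansion_coef (f : 'I_r -> 'I_m) : F :=
  (\prod_i A1 i (f i)) * \det (colsub f A2).

Lemma XiE i k : Xi A1 A2 psi i k =
  \sum_j gr_elem ((A1 i j)%:MP * 'X_j * (A2 k j)%:MP) (psi j).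
Proof.
rewrite /Xi /D_psi mul_mx_diag !mxE; apply: eq_bigr => j _.
by rewrite !mxE !gr_elemM mul1g mulg1.
Qed.

Lemma coef_det_Xi g : gr_coef (\det (Xi A1 A2 psi)) g =
  \sum_(f : {ffun 'I_r -> 'I_m} | (\prod_i psi (f i))%g == g)
     (expansion_coef f)%:MP * 'X_[mnm_of f].
Proof.
rewrite [in LHS]/determinant gr_coef_sum.
under eq_bigr => s _.
  rewrite gr_coef_signM; under eq_bigr do rewrite XiE.
  rewrite bigA_distr_bigA gr_coef_sum.
  under eq_bigr do rewrite gr_elem_prod gr_coef_elem.
  rewrite -big_mkcond /= big_distrr /=.
  over.
rewrite exchange_big /=; apply: eq_bigr => f _.
rewrite rmorphM rmorph_prod -det_tr -det_map_mx /determinant big_distrr big_distrl /=.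
apply: eq_bigr => s _; rewrite mulrCA -mulrA; congr (_ * _).
rewrite -prod_mpolyX -!big_split /=; apply: eq_bigr => i _.
by rewrite !mxE mulrAC.
Qed.

Lemma mcoeff_coef_det_Xi g mm : (gr_coef (\det (Xi A1 A2 psi)) g)@_mm =
  \sum_(f : {ffun 'I_r -> 'I_m} | ((\prod_i psi (f i))%g == g) && (mnm_of f == mm))
     expansion_coef f.
Proof.
rewrite coef_det_Xi raddf_sum big_mkcondr /=; apply: eq_bigr => f _.
by rewrite mcoeffCM mcoeffX; case: eqP; rewrite ?mulr1 ?mulr0.
Qed.

Lemma expansion_coef_neq0_inj f : expansion_coef f != 0 -> injective f.
Proof. by rewrite mulf_eq0 negb_or => /andP[_ /det_colsub_neq0_inj]. Qed.

Lemma sum_expansion_coef_mnm_of (f0 : 'I_r -> 'I_m) : injective f0 ->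
  \sum_(f : {ffun 'I_r -> 'I_m} | mnm_of f == mnm_of f0) expansion_coef f
    = \det (colsub f0 A1) * \det (colsub f0 A2).
Proof.
move=> f0_inj; pose f0_perm (s : 'S_r) := [ffun i => f0 (s i)].
rewrite (bigID (fun f : {ffun 'I_r -> 'I_m} => injectiveb f)) /=.
rewrite [X in _ + X]big1 ?addr0 => [|f /andP[_]]; last first.
  by apply: contraNeq => /expansion_coef_neq0_inj/injectiveP.
transitivity (\sum_(f in f0_perm @: [set: 'S_r]) expansion_coef f).
  apply: eq_bigl => f; apply/andP/imsetP => [[/eqP mnm_f /injectiveP f_inj] | [s _ ->]].
    have [s fE] := mnm_of_inj_perm f0_inj f_inj mnm_f.
    by exists s => //; apply/ffunP => i; rewrite ffunE fE.
  split; first by rewrite -(mnm_of_perm f0 s); apply/eqP/eq_bigr => i _; rewrite ffunE.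
  by apply/injectiveP => i j; rewrite !ffunE => /f0_inj/perm_inj.
rewrite big_imset => [|s1 s2 _ _ /ffunP eq_s12]; last first.
  by apply/permP => i; have := eq_s12 i; rewrite !ffunE => /f0_inj.
rewrite [\det (colsub f0 A1)]/determinant big_distrl /=.
apply: eq_big => [s | s _]; first by rewrite in_setT.
rewrite /expansion_coef.
have -> : colsub (f0_perm s) A2 = col_perm s (colsub f0 A2).
  by apply/matrixP => i j; rewrite !mxE ffunE.
rewrite col_permE det_mulmx det_perm odd_permV.
have -> : \prod_i A1 i (f0_perm s i) = \prod_i colsub f0 A1 i (s i).
  by apply: eq_bigr => i _; rewrite !mxE ffunE.
by rewrite [_ * (-1) ^+ _]mulrC mulrCA mulrA.
Qed.

Hypothesis abelianG : abelian [set: G].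

Let mulgC : commutative (@mulg G).
Proof. by move=> x y; apply: (centsP abelianG); rewrite inE. Qed.
HB.instance Definition _ := SemiGroup.isCommutativeLaw.Build G mulg mulgC.

Lemma prod_psi_imset (f : 'I_r -> 'I_m) : injective f ->
  (\prod_(j in f @: [set: 'I_r]) psi j = \prod_i psi (f i))%g.
Proof.
move=> f_inj; rewrite big_imset /= => [|x y _ _ /f_inj //].
by apply: eq_bigl => i; rewrite in_setT.
Qed.

Lemma mcoeff_coef_det_Xi_inj (f0 : 'I_r -> 'I_m) g :
  injective f0 -> (\prod_i psi (f0 i))%g = g ->
  (gr_coef (\det (Xi A1 A2 psi)) g)@_(mnm_of f0)
    = \det (colsub f0 A1) * \det (colsub f0 A2).
Proof.
move=> f0_inj psi_f0; rewrite mcoeff_coef_det_Xi -sum_expansion_coef_mnm_of //.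
rewrite [RHS]big_mkcond [LHS]big_mkcond; apply: eq_bigr => f _.
have [mnm_f|] := eqVneq (mnm_of f) (mnm_of f0); rewrite ?andbF ?andbT //.
case: eqP => // psi_f.
have [//|/expansion_coef_neq0_inj f_inj] := eqVneq (expansion_coef f) 0.
have [s fE] := mnm_of_inj_perm f0_inj f_inj mnm_f.
by case: psi_f; rewrite -psi_f0 [RHS](reindex_perm s); apply: eq_bigr => i _; rewrite fE.
Qed.

Lemma coef_det_Xi_neq0P g :
  gr_coef (\det (Xi A1 A2 psi)) g != 0 <->
  exists f : 'I_r -> 'I_m, [/\ injective f,
    \det (colsub f A1) * \det (colsub f A2) != 0 & (\prod_i psi (f i))%g = g].
Proof.
split=> [coef_neq0 | [f [f_inj dets_neq0 psi_f]]]; last first.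
  apply: contraNneq dets_neq0 => coef0.
  by rewrite -(mcoeff_coef_det_Xi_inj f_inj psi_f) coef0 mcoeff0.
have [mm] : exists mm, (gr_coef (\det (Xi A1 A2 psi)) g)@_mm != 0.
  move: coef_neq0; rewrite -msupp_eq0; case Esupp: msupp => [|mm ?] // _.
  by exists mm; rewrite -mcoeff_msupp Esupp mem_head.
move=> coef_mm_neq0; have := coef_mm_neq0; rewrite mcoeff_coef_det_Xi => sum_neq0.
have /existsP[f /and3P[/eqP psi_f /eqP mnm_f coef_f]] :
    [exists f : {ffun 'I_r -> 'I_m},
      [&& (\prod_i psi (f i))%g == g, mnm_of f == mm & expansion_coef f != 0]].
  apply: contraNT sum_neq0 => /existsPn none; apply/eqP/big1 => f /andP[psi_f mnm_f].
  by apply/eqP; have := none f; rewrite psi_f mnm_f negbK.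
have f_inj := expansion_coef_neq0_inj coef_f.
exists f; split; [exact: f_inj | | exact: psi_f].
by rewrite -(mcoeff_coef_det_Xi_inj f_inj psi_f) mnm_f.
Qed.

End ExpansionOfXi.

Unset Implicit Arguments.

Theorem lemma4p2 (F : fieldType) (G : finGroupType)
    (HG : abelian [set: G]) (r m : nat) (A1 A2 : 'M[F]_(r, m))
    (rkA1 : \rank A1 = r) (rkA2 : \rank A2 = r)
    (psi : 'I_m -> G) (g : G) :
  gr_coef (\det (Xi A1 A2 psi)) g != 0 <->
  exists B : {set 'I_m},
    [/\ is_rep_basis A1 B, is_rep_basis A2 B & (\prod_(j in B) psi j)%g = g].
Proof.
rewrite coef_det_Xi_neq0P //; split=> [[f [f_inj dets psi_f]] | [B [basis1 basis2 psi_B]]].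
  exists (f @: [set: 'I_r]).
  rewrite !is_rep_basis_imset // prod_psi_imset //.
  by move: dets; rewrite mulf_eq0 negb_or => /andP[].
have [f f_inj BE] := enum_set_ord (card_rep_basis rkA1 basis1).
move: basis1 basis2 psi_B; rewrite -BE !is_rep_basis_imset // prod_psi_imset //.
by exists f; split; rewrite // mulf_neq0.
Qed.
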